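(* Let $\mathcal A$ be a commutative semiring, $n\ge 2$, $V_n$ the free $\mathcal A$-module with basis $b_0,\dots,b_{n-1}$, $f\in\operatorname{End}_{\mathcal A}(V_n)$, $D(z)$ the Hasse–Schmidt derivation on $\bigwedge V_n$ associated with $f$, and $\overline D(z)$ its quasi-inverse (all as described in the context). Then for all $u,v\in\bigwedge^{>0}V_n=\bigoplus_{r\ge1}\bigwedge^rV_n$, $$\overline D(z)\bigl(D(z)u\wedge v\bigr)\ \succeq\ u\wedge \overline D(z)v .$$
   Context: Grassmann semialgebra. $\bigwedge V_n=\bigoplus_{r\ge0}\bigwedge^rV_n$ is the graded associative $\mathcal A$-semialgebra with product $\wedge$ such that $\bigwedge^0V_n=\mathcal A$, $\bigwedge^1V_n=V_n$, and for $r\ge2$, $\bigwedge^rV_n$ is the free $\mathcal A$-module with basis $\{b_I,b_I': I\subseteq\{0,\dots,n-1\},|I|=r\}$ (rank $2\binom nr$; zero if $r>n$), where $b_I=b_{i_1}\wedge\cdots\wedge b_{i_r}$ for $I=\{i_1<\dots<i_r\}$. On each $\bigwedge^rV_n$, $r\ge2$, the negation map $(-)$ is the $\mathcal A$-linear involution exchanging $b_I$ and $b_I'$; it is compatible with $\wedge$ ($((-)x)\wedge y=x\wedge((-)y)=(-)(x\wedge y)$ in degrees $\ge2$), $b_i\wedge b_i=\mathbb 0$, and $u\wedge w=(-)(w\wedge u)$ for $u,w\in V_n$. Hence a product $b_{j_1}\wedge\cdots\wedge b_{j_r}$ is $\mathbb 0$ if two indices coincide, and otherwise equals $b_I$ or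 $b_I'=(-)b_I$ according as the permutation sorting $(j_1,\dots,j_r)$ increasingly is even or odd. Write $x(-)y:=x+((-)y)$ and $(-)^j$ for the $j$-fold application of $(-)$. A quasi-zero is an element $x(-)x$. For $x,y$ of the same degree $\ge2$, $x\succeq y$ means $x=y+d$ with $d$ in the ideal generated by the quasi-zeros and all $w\wedge w$, $w\in V_n$; for power series in $z$ with such coefficients, $\succeq$ is meant coefficientwise. Hasse–Schmidt derivation. $D(z)=\sum_{i\ge0}D_iz^i$ with $D_i\in\operatorname{End}_{\mathcal A}(\bigwedge V_n)$ preserving each $\bigwedge^rV_n$, $D(z)(u\wedge v)=D(z)u\wedge D(z)v$ (i.e. $D_k(u\wedge v)=\sum_{i+j=k}D_iu\wedge D_jv$), and $D_iv=f^i(v)$ for $v\in V_n$; thus $D(z)(u_1\wedge\cdots\wedge u_r)=D(z)u_1\wedge\cdots\wedge D(z)u_r$ with $D(z)u_k=\sum_i f^i(u_k)z^i$, and $D_1=f$ on $V_n$. Operators act on power series in $z$ coefficientwise. Quasi-inverse. For $r\ge2$ and $u_1,\dots,u_r\in V_n$, $\overline D(z)(u_1\wedge\cdots\wedge u_r)=\sum_{j=0}^r z^j\,(-)^j\sum_{S\subseteq\{1,\dots,r\},|S|=j}u_1^S\wedge\cdots\wedge u_r^S$, where $u_k^S=f(u_k)$ if $k\in S$ and $u_k^S=u_k$ otherwise, extended additively; e.g. $\overline D(z)(u\wedge v)=u\wedge v+(f(v)\wedge u+v\wedge f(u))z+(f(u)\wedge f(v))z^2$. Write $\overline D(z)=\sum_j\overline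 D_jz^j$. For $u\in\bigwedge^{\ge1}V_n$ and $v=v_1\wedge\cdots\wedge v_s$ ($s\ge1$, $v_k\in V_n$), $u\wedge\overline D(z)v:=\sum_{j}z^j(-)^j\sum_{|S|=j}u\wedge v_1^S\wedge\cdots\wedge v_s^S$ (for $s\ge2$ this is $u\wedge(\overline D(z)v)$; for $s=1$ it is $u\wedge v+z\,(-)(u\wedge f(v))$), extended additively in $v$. *)

From mathcomp Require Import all_boot all_order all_algebra.
Set Implicit Arguments.
Unset Strict Implicit.
Unset Printing Implicit Defensive.
Import GRing.Theory.
Local Open Scope ring_scope.

Section Grassmann.
Variables (A : comPzSemiRingType) (n : nat).

(* Index of basis elements of /\ V_n : (I, false) is b_I and (I, true) is b_I'.
   For |I| <= 1 only (I, false) is a genuine basis element (b_emptyset = 1 in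
   degree 0, and b_{i} = b_i in V_n); the slots (I, true), |I| <= 1, are
   required to carry coefficient 0 (predicate [wf]). *)
Definition gkey := ({set 'I_n} * bool)%type.
Definition gelt := {ffun gkey -> A}.

Definition gzero : gelt := [ffun => 0].
Definition gadd (x y : gelt) : gelt := [ffun k => x k + y k].
Definition gscale (a : A) (x : gelt) : gelt := [ffun k => a * x k].
Definition gsum (I : finType) (F : I -> gelt) : gelt := \big[gadd/gzero]_(i : I) F i.
Definition gbasis (k : gkey) : gelt := [ffun k' => if k' == k then 1 else 0].
Definition gone : gelt := gbasis (set0, false).

Definition wf (x : gelt) : Prop := forall I : {set 'I_n}, (#|I| <= 1)%N -> x (I, true) = 0.
(* elements of /\^{>0} V_n = (+)_{r >= 1} /\^r V_n *)
Definition pos_part (x : gelt) : Prop := wf x /\ x (set0, false) = 0.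
(* elements of (+)_{r >= 2} /\^r V_n, where the negation map lives *)
Definition deg_ge2 (x : gelt) : Prop := forall k : gkey, (#|k.1| <= 1)%N -> x k = 0.

(* negation map (-): exchanges b_I and b_I' (used in degrees >= 2 only) *)
Definition gneg (x : gelt) : gelt := [ffun k => x (k.1, ~~ k.2)].
Definition gnegn (j : nat) (x : gelt) : gelt := if odd j then gneg x else x.

Definition ninv (I J : {set 'I_n}) : nat :=
  #|[set p : 'I_n * 'I_n | (p.1 \in I) && (p.2 \in J) && (p.2 < p.1)%N]|.

Definition wedge_basis (k1 k2 : gkey) : gelt :=
  if [disjoint k1.1 & k2.1]
  then gbasis (k1.1 :|: k2.1, k1.2 (+) k2.2 (+) odd (ninv k1.1 k2.1))
  else gzero.

Definition wedge (x y : gelt) : gelt :=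
  gsum (fun k1 : gkey => gsum (fun k2 : gkey => gscale (x k1 * y k2) (wedge_basis k1 k2))).

Definition vec (c : 'I_n -> A) : gelt := gsum (fun i : 'I_n => gscale (c i) (gbasis ([set i], false))).
Definition unitv (i : 'I_n) : 'I_n -> A := fun j => if j == i then 1 else 0.

(* f in End_A(V_n), given by its matrix: f(b_i) = \sum_j M j i b_j *)
Definition fV (M : 'M[A]_n) (c : 'I_n -> A) : 'I_n -> A := fun j => \sum_i M j i * c i.

(* coefficient of z^k in D(z)c_1 /\ ... /\ D(z)c_r, with D(z)c = \sum_i f^i(c) z^i *)
Fixpoint DL (M : 'M[A]_n) (k : nat) (l : seq ('I_n -> A)) : gelt :=
  match l with
  | [::] => if k == 0%N then gone else gzero
  | c :: l' => gsum (fun i : 'I_k.+1 => wedge (vec (iter i (fV M) c)) (DL M (k - i) l'))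
  end.

Definition units (I : {set 'I_n}) : seq ('I_n -> A) := [seq unitv i | i <- enum I].

(* D_k : the k-th component of the Hasse-Schmidt derivation on /\ V_n, with
   D(z) b_I = D(z) b_{i_1} /\ ... /\ D(z) b_{i_r},  D(z) b_I' = (-) D(z) b_I *)
Definition Dk (M : 'M[A]_n) (k : nat) (x : gelt) : gelt :=
  gsum (fun key : gkey => gscale (x key) (gnegn key.2 (DL M k (units key.1)))).

(* sum over S subset of positions with |S| = j of u_1^S /\ ... /\ u_r^S *)
Fixpoint DbarL (M : 'M[A]_n) (j : nat) (l : seq ('I_n -> A)) : gelt :=
  match l with
  | [::] => if j == 0%N then gone else gzero
  | c :: l' => gadd (wedge (vec c) (DbarL M j l'))
                    (if j is j'.+1 then wedge (vec (fV M c)) (DbarL M j' l') else gzero)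
  end.

Definition Dbark (M : 'M[A]_n) (j : nat) (x : gelt) : gelt :=
  gsum (fun key : gkey => gscale (x key) (gnegn (j + key.2) (DbarL M j (units key.1)))).

Definition wedgeDbark (M : 'M[A]_n) (j : nat) (u v : gelt) : gelt :=
  gsum (fun key : gkey =>
          gscale (v key) (gnegn (j + key.2) (wedge u (DbarL M j (units key.1))))).

(* coefficient of z^m of  Dbar(z) (D(z) u /\ v)  *)
Definition lhs_coef (M : 'M[A]_n) (m : nat) (u v : gelt) : gelt :=
  gsum (fun i : 'I_m.+1 => Dbark M i (wedge (Dk M (m - i) u) v)).

Inductive qideal : gelt -> Prop :=
  | qideal0 : qideal gzero
  | qideal_qz x : wf x -> deg_ge2 x -> qideal (gadd x (gneg x))
  | qideal_ww c : qideal (wedge (vec c) (vec c))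
  | qideal_add d e : qideal d -> qideal e -> qideal (gadd d e)
  | qideal_mull a d : wf a -> qideal d -> qideal (wedge a d)
  | qideal_mulr a d : wf a -> qideal d -> qideal (wedge d a).

Definition succeq (x y : gelt) : Prop := exists d, qideal d /\ x = gadd y d.

End Grassmann.

(* Both sides are A-linear in u and the relation is stable under sums, scalars, the negation
   map and left wedging, so it suffices to take u = b_K.  Writing b_K = b_k /\ b_K' with
   k = min K, the identity D(z)(b_k /\ w) = D(z)b_k /\ D(z)w and an induction on |K| reduce the
   claim to a single vector c:  sum_(i <= h) Dbar_i (f^(h-i) c /\ V) >= c /\ Dbar_h V, and by
   linearity in V to V = b_J with J nonempty.  Antisymmetry of the defining sum of Dbar gives
   the Leibniz rule  Dbar(z)(b_c /\ b_K) = b_c /\ Dbar(z) b_K (-) z f(b_c) /\ Dbar(z) b_K  for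
   c outside K.  Splitting c into its parts off and on J, the Leibniz rule handles the first
   part, while for the second  f(c_J) /\ Dbar_t b_J >= c_J /\ Dbar_(t+1) b_J  and
   c_J /\ Dbar_0 b_J = 0.  An induction on h then telescopes, each step leaving a quasi-zero
   x (-) x with x = f(c_off) /\ Dbar_h b_J.  Every element of the ideal produced along the way,
   w /\ w included (it is fixed by (-)), is a single quasi-zero of degree >= 2, so the proof runs
   with the finer relation [qsucceq]. *)

From HB Require Import structures.
From mathcomp Require Import all_boot all_order all_algebra.
Set Implicit Arguments.
Unset Strict Implicit.
Unset Printing Implicit Defensive.
Import GRing.Theory.
Local Open Scope ring_scope.

Section GradedModule.
Variables (A : comPzSemiRingType) (n : nat).
Local Notation gelt := (gelt A n).
Local Notation gkey := (gkey n).
Local Notation gbasis := (@gbasis A n).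
Local Notation gscale := (@gscale A n).
Local Notation gneg := (@gneg A n).
Local Notation gnegn := (@gnegn A n).
Implicit Types (x y : gelt) (a b : A) (k : gkey).

Lemma gscale_is_nmod_morphism a : nmod_morphism (gscale a).
Proof. by split=> [|x y]; apply/ffunP=> k; rewrite !ffunE ?mulr0 ?mulrDr. Qed.
HB.instance Definition _ a :=
  GRing.isNmodMorphism.Build gelt gelt (gscale a) (gscale_is_nmod_morphism a).

Lemma gneg_is_nmod_morphism : nmod_morphism gneg.
Proof. by split=> [|x y]; apply/ffunP=> k; rewrite !ffunE. Qed.
HB.instance Definition _ :=
  GRing.isNmodMorphism.Build gelt gelt gneg gneg_is_nmod_morphism.

Lemma gnegn_is_nmod_morphism j : nmod_morphism (gnegn j).
Proof. by rewrite /gnegn; case: (odd j); split=> // [|x y]; rewrite ?raddf0 ?raddfD. Qed.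
HB.instance Definition _ j :=
  GRing.isNmodMorphism.Build gelt gelt (gnegn j) (gnegn_is_nmod_morphism j).

Lemma gscale0r x : gscale 0 x = 0.
Proof. by apply/ffunP=> k; rewrite !ffunE mul0r. Qed.
Lemma gscale1r x : gscale 1 x = x.
Proof. by apply/ffunP=> k; rewrite !ffunE mul1r. Qed.
Lemma gscalerDl a b x : gscale (a + b) x = gscale a x + gscale b x.
Proof. by apply/ffunP=> k; rewrite !ffunE mulrDl. Qed.
Lemma gscalerA a b x : gscale a (gscale b x) = gscale (a * b) x.
Proof. by apply/ffunP=> k; rewrite !ffunE mulrA. Qed.
Lemma gscaler_suml (I : finType) (F : I -> A) x :
  gscale (\sum_i F i) x = \sum_i gscale (F i) x.
Proof. exact: (big_morph (gscale^~ x) (fun a b => gscalerDl a b x) (gscale0r x)). Qed.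

Lemma gscalerDr a x y : gscale a (x + y) = gscale a x + gscale a y.
Proof. exact: raddfD. Qed.
Lemma gscaler_sumr (I : finType) a (F : I -> gelt) :
  gscale a (\sum_i F i) = \sum_i gscale a (F i).
Proof. exact: raddf_sum. Qed.

Lemma gnegK : involutive gneg.
Proof. by move=> x; apply/ffunP=> -[K b]; rewrite !ffunE /= negbK. Qed.
Lemma gnegD x y : gneg (x + y) = gneg x + gneg y.
Proof. exact: raddfD. Qed.
Lemma gneg_sum (I : finType) (F : I -> gelt) : gneg (\sum_i F i) = \sum_i gneg (F i).
Proof. exact: raddf_sum. Qed.
Lemma gnegZ a x : gneg (gscale a x) = gscale a (gneg x).
Proof. by apply/ffunP=> k; rewrite !ffunE. Qed.

Lemma gnegnS j x : gnegn j.+1 x = gneg (gnegn j x).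
Proof. by rewrite /gnegn /=; case: (odd j); rewrite ?gnegK. Qed.
Lemma gnegnD i j x : gnegn (i + j) x = gnegn i (gnegn j x).
Proof. by rewrite /gnegn oddD; case: (odd i); case: (odd j); rewrite ?gnegK. Qed.
Lemma gnegn_odd j x : gnegn (odd j) x = gnegn j x.
Proof. by rewrite /gnegn oddb. Qed.
Lemma gnegnK j : involutive (gnegn j).
Proof. by move=> x; rewrite -gnegnD /gnegn oddD addbb. Qed.
Lemma gnegn_addN j (b : bool) x : gnegn (j + ~~ b) x = gneg (gnegn (j + b) x).
Proof. by case: b; rewrite /= ?addn0 ?addn1 gnegnS ?gnegK. Qed.

Definition flip_key k : gkey := (k.1, ~~ k.2).
Lemma flip_keyK : involutive flip_key.
Proof. by case=> K b; rewrite /flip_key /= negbK. Qed.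

Lemma gneg_gbasis k : gneg (gbasis k) = gbasis (flip_key k).
Proof.
apply/ffunP=> -[K b]; case: k => K' b'; rewrite !ffunE /= !xpair_eqE.
by case: (K == K'); case: b; case: b'.
Qed.

Definition gext (F : gkey -> gelt) x : gelt := \sum_k gscale (x k) (F k).

Lemma gext_is_nmod_morphism F : nmod_morphism (gext F).
Proof.
split=> [|x y]; rewrite /gext.
  by rewrite big1 // => k _; rewrite ffunE gscale0r.
by rewrite -big_split; apply: eq_bigr => k _; rewrite ffunE gscalerDl.
Qed.
HB.instance Definition _ F :=
  GRing.isNmodMorphism.Build gelt gelt (gext F) (gext_is_nmod_morphism F).

Lemma gextZ F a x : gext F (gscale a x) = gscale a (gext F x).
Proof.
rewrite /gext raddf_sum; apply: eq_bigr => k _.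
by rewrite /= ffunE gscalerA.
Qed.

Lemma gext_gbasis F k : gext F (gbasis k) = F k.
Proof.
rewrite /gext (bigD1 k) //= big1 => [|k' /negbTE nk'].
  by rewrite ffunE eqxx gscale1r addr0.
by rewrite ffunE nk' gscale0r.
Qed.

Lemma gext_gbasisE x : gext gbasis x = x.
Proof.
apply/ffunP=> k; rewrite /gext sum_ffunE (bigD1 k) //= big1 => [|k' /negbTE nk'].
  by rewrite !ffunE eqxx mulr1 addr0.
by rewrite !ffunE eq_sym nk' mulr0.
Qed.

Lemma gext_comp F (G : {additive gelt -> gelt}) :
  (forall a x, G (gscale a x) = gscale a (G x)) ->
  forall x, G (gext F x) = gext (G \o F) x.
Proof. by move=> GZ x; rewrite raddf_sum; apply: eq_bigr => k _; rewrite GZ. Qed.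

Lemma gextN F : (forall k, F (flip_key k) = gneg (F k)) ->
  forall x, gext F (gneg x) = gneg (gext F x).
Proof.
move=> FN x; rewrite (gext_comp _ gnegZ) /gext.
rewrite (reindex_inj (can_inj flip_keyK)); apply: eq_bigr => k _.
by case: k => K b; rewrite ffunE /= FN /flip_key /= negbK.
Qed.

Lemma gext_sumF (I : finType) (F : I -> gkey -> gelt) x :
  \sum_i gext (F i) x = gext (fun k => \sum_i F i k) x.
Proof.
rewrite /gext exchange_big; apply: eq_bigr => k _.
by rewrite gscaler_sumr.
Qed.

Lemma eq_gext F G x : F =1 G -> gext F x = gext G x.
Proof. by move=> FG; apply: eq_bigr => k _; rewrite FG. Qed.

End GradedModule.

Section Wedge.
Variables (A : comPzSemiRingType) (n : nat).
Local Notation gelt := (gelt A n).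
Local Notation gkey := (gkey n).
Local Notation gbasis := (@gbasis A n).
Local Notation gscale := (@gscale A n).
Local Notation gneg := (@gneg A n).
Local Notation gnegn := (@gnegn A n).
Local Notation gext := (@gext A n).
Local Notation wedge := (@wedge A n).
Local Notation wedge_basis := (@wedge_basis A n).
Implicit Types (x y z : gelt) (a : A) (k : gkey).

Lemma wedgeE x y : wedge x y = gext (fun k1 => gext (wedge_basis k1) y) x.
Proof.
apply: eq_bigr => k1 _; rewrite /gext raddf_sum; apply: eq_bigr => k2 _.
by rewrite /= gscalerA.
Qed.

Lemma wedgeEr x y : wedge x y = gext (fun k2 => gext (wedge_basis^~ k2) x) y.
Proof.
change (\sum_k1 \sum_k2 gscale (x k1 * y k2) (wedge_basis k1 k2) =
        gext (fun k2 => gext (wedge_basis^~ k2) x) y).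
rewrite exchange_big; apply: eq_bigr => k2 _.
rewrite raddf_sum; apply: eq_bigr => k1 _.
by rewrite /= gscalerA mulrC.
Qed.

Lemma wedge_is_nmod_morphism x : nmod_morphism (wedge x).
Proof. by split=> [|y z]; rewrite !wedgeEr ?raddf0 ?raddfD. Qed.
HB.instance Definition _ x :=
  GRing.isNmodMorphism.Build gelt gelt (wedge x) (wedge_is_nmod_morphism x).

Lemma wedge0l y : wedge 0 y = 0.
Proof. by rewrite wedgeE raddf0. Qed.
Lemma wedgeDl x y z : wedge (x + y) z = wedge x z + wedge y z.
Proof. by rewrite !wedgeE raddfD. Qed.
Lemma wedge_suml (I : finType) (F : I -> gelt) y :
  wedge (\sum_i F i) y = \sum_i wedge (F i) y.
Proof. exact: (big_morph (wedge^~ y) (fun x z => wedgeDl x z y) (wedge0l y)). Qed.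
Lemma wedge0r x : wedge x 0 = 0.
Proof. exact: raddf0. Qed.
Lemma wedgeDr x y z : wedge x (y + z) = wedge x y + wedge x z.
Proof. exact: raddfD. Qed.
Lemma wedge_sumr (I : finType) x (F : I -> gelt) :
  wedge x (\sum_i F i) = \sum_i wedge x (F i).
Proof. exact: raddf_sum. Qed.
Lemma wedgeZl a x y : wedge (gscale a x) y = gscale a (wedge x y).
Proof. by rewrite !wedgeE gextZ. Qed.
Lemma wedgeZr a x y : wedge x (gscale a y) = gscale a (wedge x y).
Proof. by rewrite !wedgeEr gextZ. Qed.

Lemma wedge_gextl F x y : wedge (gext F x) y = gext (fun k => wedge (F k) y) x.
Proof. by rewrite wedge_suml; apply: eq_bigr => k _; rewrite wedgeZl. Qed.
Lemma wedge_gextr F x y : wedge x (gext F y) = gext (fun k => wedge x (F k)) y.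
Proof. exact: (gext_comp _ (wedgeZr^~ x)). Qed.

Lemma wedge_gbasis k1 k2 : wedge (gbasis k1) (gbasis k2) = wedge_basis k1 k2.
Proof. by rewrite wedgeE !gext_gbasis. Qed.

Lemma wedge_basis_flipl k1 k2 :
  wedge_basis (flip_key k1) k2 = gneg (wedge_basis k1 k2).
Proof.
rewrite /wedge_basis /=; case: ifP => _; last by rewrite raddf0.
by rewrite gneg_gbasis /flip_key /= !addNb.
Qed.
Lemma wedge_basis_flipr k1 k2 :
  wedge_basis k1 (flip_key k2) = gneg (wedge_basis k1 k2).
Proof.
rewrite /wedge_basis /=; case: ifP => _; last by rewrite raddf0.
by rewrite gneg_gbasis /flip_key /= addbN addNb.
Qed.

Lemma wedgeNl x y : wedge (gneg x) y = gneg (wedge x y).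
Proof.
rewrite !wedgeE gextN // => k1; rewrite (gext_comp _ (@gnegZ _ _)).
by apply: eq_gext => k2; rewrite wedge_basis_flipl.
Qed.
Lemma wedgeNr x y : wedge x (gneg y) = gneg (wedge x y).
Proof.
rewrite !wedgeEr gextN // => k2; rewrite (gext_comp _ (@gnegZ _ _)).
by apply: eq_gext => k1; rewrite wedge_basis_flipr.
Qed.
Lemma wedgeNnr j x y : wedge x (gnegn j y) = gnegn j (wedge x y).
Proof. by rewrite /gnegn; case: (odd j); rewrite ?wedgeNr. Qed.

End Wedge.

Lemma ninvUl n (I J K : {set 'I_n}) : [disjoint I & J] ->
  ninv (I :|: J) K = (ninv I K + ninv J K)%N.
Proof.
move=> dIJ; rewrite /ninv -cardsUI.
set S1 := [set p | _]; set S2 := [set p | _]; set S3 := [set p | _].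
have -> : S2 :&: S3 = set0.
  apply/setP=> -[a b]; rewrite !inE /=.
  apply/negP=> /andP[/andP[/andP[aI _] _] /andP[/andP[aJ _] _]].
  by move: (disjointFr dIJ aI); rewrite aJ.
rewrite cards0 addn0; apply: eq_card => -[a b]; rewrite !inE /=.
by case: (a \in I); case: (a \in J); rewrite /= ?orbF ?orbb.
Qed.

Lemma ninvUr n (I J K : {set 'I_n}) : [disjoint J & K] ->
  ninv I (J :|: K) = (ninv I J + ninv I K)%N.
Proof.
move=> dJK; rewrite /ninv -cardsUI.
set S1 := [set p | _]; set S2 := [set p | _]; set S3 := [set p | _].
have -> : S2 :&: S3 = set0.
  apply/setP=> -[a b]; rewrite !inE /=.
  apply/negP=> /andP[/andP[/andP[_ bJ] _] /andP[/andP[_ bK] _]].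
  by move: (disjointFr dJK bJ); rewrite bK.
rewrite cards0 addn0; apply: eq_card => -[a b]; rewrite !inE /=.
by case: (a \in I); case: (b \in J); case: (b \in K); rewrite /= ?andbF ?orbF ?orbb.
Qed.

Section Associativity.
Variables (A : comPzSemiRingType) (n : nat).
Local Notation gelt := (gelt A n).
Local Notation gbasis := (@gbasis A n).
Local Notation wedge := (@wedge A n).
Local Notation wedge_basis := (@wedge_basis A n).

Lemma disjoint_setUl (T : finType) (B C D : {set T}) :
  [disjoint B :|: C & D] = [disjoint B & D] && [disjoint C & D].
Proof. by rewrite -!setI_eq0 setIUl setU_eq0. Qed.
Lemma disjoint_setUr (T : finType) (B C D : {set T}) :
  [disjoint B & C :|: D] = [disjoint B & C] && [disjoint B & D].
Proof. by rewrite -!setI_eq0 setIUr setU_eq0. Qed.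

Lemma wedge_basisA k1 k2 k3 :
  wedge (wedge_basis k1 k2) (gbasis k3) = wedge (gbasis k1) (wedge_basis k2 k3).
Proof.
case: k1 k2 k3 => [K1 b1] [K2 b2] [K3 b3]; rewrite /wedge_basis /=.
case d12: [disjoint K1 & K2]; case d23: [disjoint K2 & K3];
  rewrite ?wedge0l ?raddf0 // !wedge_gbasis /wedge_basis /=;
  rewrite ?disjoint_setUl ?disjoint_setUr ?d12 ?d23 ?andbF //=.
case: [disjoint K1 & K3] => //; rewrite setUA ninvUl // ninvUr // !oddD.
by case: b1; case: b2; case: b3; case: (odd (ninv K1 K2)); case: (odd (ninv K1 K3));
   case: (odd (ninv K2 K3)).
Qed.

Lemma wedgeA (x y z : gelt) : wedge (wedge x y) z = wedge x (wedge y z).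
Proof.
rewrite [wedge x y]wedgeE wedge_gextl -[x in RHS]gext_gbasisE wedge_gextl.
apply: eq_gext => k1 /=; rewrite wedge_gextl [wedge y z]wedgeE wedge_gextr.
apply: eq_gext => k2 /=; rewrite -[z in LHS]gext_gbasisE wedge_gextr wedge_gextr.
by apply: eq_gext => k3; rewrite wedge_basisA.
Qed.

End Associativity.

Section Vectors.
Variables (A : comPzSemiRingType) (n : nat).
Local Notation gbasis := (@gbasis A n).
Local Notation gscale := (@gscale A n).
Local Notation gneg := (@gneg A n).
Local Notation wedge := (@wedge A n).
Local Notation wedge_basis := (@wedge_basis A n).
Local Notation vec := (@vec A n).
Local Notation unitv := (@unitv A n).
Implicit Types (c d : 'I_n -> A) (K : {set 'I_n}).

Lemma vecE c : vec c = \sum_i gscale (c i) (gbasis ([set i], false)).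
Proof. by []. Qed.
Lemma eq_vec c d : c =1 d -> vec c = vec d.
Proof. by move=> cd; rewrite !vecE; apply: eq_bigr => i _; rewrite cd. Qed.
Lemma vecD c d : vec (fun i => c i + d i) = vec c + vec d.
Proof. by rewrite !vecE -big_split; apply: eq_bigr => i _; rewrite gscalerDl. Qed.

Lemma vec_unitv i : vec (unitv i) = gbasis ([set i], false).
Proof.
rewrite vecE (bigD1 i) //= big1 => [|j /negbTE nji]; first by rewrite /unitv eqxx gscale1r addr0.
by rewrite /unitv nji gscale0r.
Qed.
Lemma vec_expand c : vec c = \sum_i gscale (c i) (vec (unitv i)).
Proof. by rewrite vecE; apply: eq_bigr => i _; rewrite vec_unitv. Qed.

Lemma fVD (M : 'M[A]_n) c d : fV M (fun i => c i + d i) =1 fun j => fV M c j + fV M d j.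
Proof. by move=> j; rewrite /fV -big_split; apply: eq_bigr => i _; rewrite mulrDr. Qed.

Lemma vec_fV (M : 'M[A]_n) c :
  vec (fV M c) = \sum_i gscale (c i) (vec (fV M (unitv i))).
Proof.
have fV_unitv i j : fV M (unitv i) j = M j i.
  rewrite /fV (bigD1 i) //= big1 => [|k /negbTE nki]; first by rewrite /unitv eqxx mulr1 addr0.
  by rewrite /unitv nki mulr0.
rewrite vecE; under eq_bigr do rewrite gscaler_suml.
rewrite exchange_big; apply: eq_bigr => i _ /=.
by rewrite vecE gscaler_sumr; apply: eq_bigr => j _; rewrite gscalerA fV_unitv mulrC.
Qed.

Lemma ninv_set1 (i j : 'I_n) : ninv [set i] [set j] = (j < i)%N.
Proof.
rewrite /ninv; case: (ltnP j i) => ji /=.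
  rewrite -(cards1 (i, j)); apply: eq_card => -[a b]; rewrite !inE /= xpair_eqE.
  by case: (a =P i) => [->|]; case: (b =P j) => [->|]; rewrite ?andbF ?ji.
apply/eqP; rewrite cards_eq0; apply/eqP/setP => -[a b]; rewrite !inE /=.
by apply/negP => /andP[/andP[/eqP -> /eqP ->]]; rewrite ltnNge ji.
Qed.

Lemma wedge_vec c d : wedge (vec c) (vec d) =
  \sum_(i < n) \sum_(j < n) gscale (c i * d j) (wedge_basis ([set i], false) ([set j], false)).
Proof.
rewrite vecE wedge_suml; apply: eq_bigr => i _.
rewrite wedgeZl vecE wedge_sumr gscaler_sumr; apply: eq_bigr => j _.
by rewrite wedgeZr wedge_gbasis gscalerA.
Qed.

Lemma wedge_vecC c d : wedge (vec c) (vec d) = gneg (wedge (vec d) (vec c)).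
Proof.
have swap i j : wedge_basis ([set i], false) ([set j], false) =
                gneg (wedge_basis ([set j], false) ([set i], false)).
  rewrite /wedge_basis /= !disjoints1 !inE eq_sym; case: eqP => [->|/eqP nij /=].
    by rewrite raddf0.
  rewrite gneg_gbasis setUC !ninv_set1 /flip_key /=.
  by case: ltngtP => // /val_inj eij; move: nij; rewrite eij eqxx.
rewrite !wedge_vec gneg_sum exchange_big; apply: eq_bigr => j _.
rewrite gneg_sum; apply: eq_bigr => i _.
by rewrite swap gnegZ mulrC.
Qed.

Lemma wedge_vecCA c d z :
  wedge (vec c) (wedge (vec d) z) = gneg (wedge (vec d) (wedge (vec c) z)).
Proof. by rewrite -!wedgeA wedge_vecC wedgeNl. Qed.

Lemma wedge_unitv_in i K (b : bool) : i \in K -> wedge (vec (unitv i)) (gbasis (K, b)) = 0.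
Proof. by move=> iK; rewrite vec_unitv wedge_gbasis /wedge_basis /= disjoints1 iK. Qed.

Lemma wedge_unitv_notin i K (b : bool) : i \notin K ->
  wedge (vec (unitv i)) (gbasis (K, b)) = gbasis (i |: K, b (+) odd (ninv [set i] K)).
Proof. by move=> iK; rewrite vec_unitv wedge_gbasis /wedge_basis /= disjoints1 (negbTE iK). Qed.

Lemma wedge_unitv_unitv i : wedge (vec (unitv i)) (vec (unitv i)) = 0.
Proof. by rewrite [X in wedge _ X]vec_unitv wedge_unitv_in ?set11. Qed.

End Vectors.

Section Degree.
Variables (A : comPzSemiRingType) (n : nat).
Local Notation gelt := (gelt A n).
Local Notation gkey := (gkey n).
Local Notation gext := (@gext A n).
Local Notation gscale := (@gscale A n).
Local Notation gneg := (@gneg A n).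
Local Notation gnegn := (@gnegn A n).
Local Notation wedge := (@wedge A n).
Local Notation vec := (@vec A n).
Implicit Types (x y z d e : gelt) (a : A).

(* [deg_ge 2] is convertible to [deg_ge2]. *)
Definition deg_ge r x := forall k : gkey, (#|k.1| < r)%N -> x k = 0.

Lemma deg_ge0 r : deg_ge r 0.
Proof. by move=> k _; rewrite ffunE. Qed.
Lemma deg_geD r x y : deg_ge r x -> deg_ge r y -> deg_ge r (x + y).
Proof. by move=> hx hy k hk; rewrite ffunE hx ?hy ?addr0. Qed.
Lemma deg_ge_sum r (I : finType) (F : I -> gelt) :
  (forall i, deg_ge r (F i)) -> deg_ge r (\sum_i F i).
Proof. by move=> hF; elim/big_ind: _ => //; [exact: deg_ge0 | exact: deg_geD]. Qed.
Lemma deg_geZ r a x : deg_ge r x -> deg_ge r (gscale a x).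
Proof. by move=> hx k hk; rewrite ffunE hx ?mulr0. Qed.
Lemma deg_geN r x : deg_ge r x -> deg_ge r (gneg x).
Proof. by move=> hx k hk; rewrite ffunE hx. Qed.
Lemma deg_geNn r j x : deg_ge r x -> deg_ge r (gnegn j x).
Proof. by rewrite /gnegn; case: (odd j) => //; apply: deg_geN. Qed.

Lemma deg_ge_wedge r s x y : deg_ge r x -> deg_ge s y -> deg_ge (r + s) (wedge x y).
Proof.
move=> hx hy [K b] /= hK; rewrite wedgeE /gext sum_ffunE big1 // => -[K1 b1] _.
rewrite ffunE; have [/(hx (K1, b1)) -> | rK1] := ltnP #|K1| r; first by rewrite mul0r.
rewrite sum_ffunE big1 ?mulr0 // => -[K2 b2] _; rewrite ffunE.
have [/(hy (K2, b2)) -> | sK2] := ltnP #|K2| s; first by rewrite mul0r.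
rewrite /wedge_basis /=; case: ifP => [d12|_]; last by rewrite ffunE mulr0.
rewrite ffunE xpair_eqE; case: eqP => [eK|_]; last by rewrite mulr0.
by move: hK; rewrite eK cardsU (disjoint_setI0 d12) cards0 subn0 ltnNge leq_add.
Qed.

Lemma deg_ge_wedgel r x y : deg_ge r x -> deg_ge r (wedge x y).
Proof. by move=> xr; rewrite -[r]addn0; apply: deg_ge_wedge. Qed.
Lemma deg_ge_wedger r x y : deg_ge r y -> deg_ge r (wedge x y).
Proof. by move=> yr; rewrite -[r]add0n; apply: deg_ge_wedge. Qed.

Lemma deg_ge1_vec c : deg_ge 1 (vec c).
Proof.
apply: deg_ge_sum => i [K b] /=; rewrite ltnS leqn0 cards_eq0 => /eqP ->.
rewrite !ffunE xpair_eqE; case: eqP => [e|]; last by rewrite mulr0.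
by have := set11 i; rewrite -e inE.
Qed.

Definition quasi_zero d := exists2 x, deg_ge 2 x & d = x + gneg x.

Lemma quasi_zero_qideal d : quasi_zero d -> qideal d.
Proof.
by case=> x x2 ->; apply: qideal_qz => [I I1|]; [exact: (x2 (I, true)) | exact: x2].
Qed.

Lemma quasi_zero_addN x : deg_ge 2 x -> quasi_zero (x + gneg x).
Proof. by exists x. Qed.
Lemma quasi_zero0 : quasi_zero 0.
Proof. by exists 0; [exact: deg_ge0 | rewrite raddf0 addr0]. Qed.
Lemma quasi_zeroD d e : quasi_zero d -> quasi_zero e -> quasi_zero (d + e).
Proof.
case=> x x2 -> [y y2 ->]; exists (x + y); first exact: deg_geD.
by rewrite raddfD addrACA.
Qed.
Lemma quasi_zeroZ a d : quasi_zero d -> quasi_zero (gscale a d).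
Proof.
case=> x x2 ->; exists (gscale a x); first exact: deg_geZ.
by rewrite raddfD gnegZ.
Qed.
Lemma quasi_zeroN d : quasi_zero d -> quasi_zero (gneg d).
Proof.
case=> x x2 ->; exists (gneg x); first exact: deg_geN.
by rewrite raddfD.
Qed.
Lemma quasi_zeroNn j d : quasi_zero d -> quasi_zero (gnegn j d).
Proof. by rewrite /gnegn; case: (odd j) => //; apply: quasi_zeroN. Qed.
Lemma quasi_zero_wedgel d y : quasi_zero d -> quasi_zero (wedge d y).
Proof.
case=> x x2 ->; exists (wedge x y); last by rewrite wedgeDl wedgeNl.
exact: deg_ge_wedgel.
Qed.
Lemma quasi_zero_wedger d y : quasi_zero d -> quasi_zero (wedge y d).
Proof.
case=> x x2 ->; exists (wedge y x); last by rewrite wedgeDr wedgeNr.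
exact: deg_ge_wedger.
Qed.

Lemma quasi_zero_fixed d : deg_ge 2 d -> gneg d = d -> quasi_zero d.
Proof.
move=> d2 dN; exists [ffun k : gkey => if k.2 then 0 else d k].
  by move=> k k2; rewrite ffunE d2 ?if_same.
apply/ffunP=> -[K b]; rewrite !ffunE /=.
have dK : d (K, true) = d (K, false) by rewrite -{1}dN ffunE.
by case: b; rewrite /= ?add0r ?addr0 ?dK.
Qed.

Lemma quasi_zero_wedge_vec c : quasi_zero (wedge (vec c) (vec c)).
Proof.
apply: quasi_zero_fixed; last by rewrite [in RHS]wedge_vecC.
exact: deg_ge_wedge (deg_ge1_vec c) (deg_ge1_vec c).
Qed.

Definition qsucceq x y := exists2 d, quasi_zero d & x = y + d.

Lemma qsucceq_succeq x y : qsucceq x y -> succeq x y.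
Proof. by case=> d /quasi_zero_qideal qd ->; exists d; split. Qed.

Lemma qsucceqxx x : qsucceq x x.
Proof. by exists 0; [exact: quasi_zero0 | rewrite addr0]. Qed.
Lemma qsucceq_trans y x z : qsucceq x y -> qsucceq y z -> qsucceq x z.
Proof.
case=> d qd -> [e qe ->]; exists (e + d); first exact: quasi_zeroD.
by rewrite addrA.
Qed.
Lemma qsucceq_addr x d : quasi_zero d -> qsucceq (x + d) x.
Proof. by exists d. Qed.
Lemma qsucceqD x1 y1 x2 y2 :
  qsucceq x1 y1 -> qsucceq x2 y2 -> qsucceq (x1 + x2) (y1 + y2).
Proof.
case=> d qd -> [e qe ->]; exists (d + e); first exact: quasi_zeroD.
by rewrite addrACA.
Qed.
Lemma qsucceq_sum (I : finType) (F G : I -> gelt) :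
  (forall i, qsucceq (F i) (G i)) -> qsucceq (\sum_i F i) (\sum_i G i).
Proof.
move=> FG; elim/big_rec2: _ => [|i x y _ IH]; first exact: qsucceqxx.
exact: qsucceqD.
Qed.
Lemma qsucceqZ a x y : qsucceq x y -> qsucceq (gscale a x) (gscale a y).
Proof. by case=> d qd ->; exists (gscale a d); [exact: quasi_zeroZ | rewrite raddfD]. Qed.
Lemma qsucceqN x y : qsucceq x y -> qsucceq (gneg x) (gneg y).
Proof. by case=> d qd ->; exists (gneg d); [exact: quasi_zeroN | rewrite raddfD]. Qed.
Lemma qsucceq_gext F G x :
  (forall k, x k != 0 -> qsucceq (F k) (G k)) -> qsucceq (gext F x) (gext G x).
Proof.
move=> FG; apply: qsucceq_sum => k; have [-> | /FG/qsucceqZ //] := eqVneq (x k) 0.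
by rewrite !gscale0r; apply: qsucceqxx.
Qed.
Lemma qsucceq_wedgel z x y : qsucceq x y -> qsucceq (wedge z x) (wedge z y).
Proof. by case=> d qd ->; exists (wedge z d); [exact: quasi_zero_wedger | rewrite wedgeDr]. Qed.

End Degree.

Definition ord_lt n : rel 'I_n := fun i j => (i < j)%N.

Section SortedEnum.
Variable n : nat.
Local Notation ord_lt := (@ord_lt n).
Implicit Types (c : 'I_n) (s : seq 'I_n) (K : {set 'I_n}).

Lemma ord_lt_trans : transitive ord_lt.
Proof. by move=> j i k; apply: ltn_trans. Qed.
Lemma ord_lt_irr : irreflexive ord_lt.
Proof. by move=> i; apply: ltnn. Qed.

Lemma sorted_enum K : sorted ord_lt (enum K).
Proof.
have -> : enum K = filter (mem K) (enum 'I_n) by rewrite enumT.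
apply: (sorted_filter ord_lt_trans).
by have := iota_ltn_sorted 0 n; rewrite -val_enum_ord sorted_map.
Qed.

Lemma eq_sorted_enum s K : sorted ord_lt s -> s =i K -> s = enum K.
Proof.
move=> ss sK; apply: (irr_sorted_eq ord_lt_trans ord_lt_irr) => // [|x].
  exact: sorted_enum.
by rewrite mem_enum sK.
Qed.

Fixpoint ins c s :=
  if s is k :: s' then if (c < k)%N then c :: s else k :: ins c s' else [:: c].

Lemma mem_ins c s : ins c s =i c :: s.
Proof.
elim: s => [|k s IH] x //=; case: ifP => _ //.
by rewrite !inE IH !inE orbCA.
Qed.

Lemma sorted_ins c s : c \notin s -> sorted ord_lt s -> sorted ord_lt (ins c s).
Proof.
elim: s => [|k s IH] //=; rewrite inE negb_or => /andP[ck cs] ks.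
case: ifP => ltck; first by rewrite /= {1}/ord_lt ltck ks.
have ltkc : (k < c)%N.
  by rewrite ltn_neqAle leqNgt ltck andbT eq_sym; apply: contra ck => /eqP/val_inj->.
rewrite /= (path_sortedE ord_lt_trans) IH ?(path_sorted ks) // andbT.
apply/allP => x; rewrite mem_ins inE => /orP[/eqP -> //|xs].
by move: ks; rewrite (path_sortedE ord_lt_trans) => /andP[/allP/(_ x xs)].
Qed.

Lemma enum_setU1 c K : c \notin K -> enum (c |: K) = ins c (enum K).
Proof.
move=> cK; apply/esym/eq_sorted_enum => [|x].
  by apply: sorted_ins; rewrite ?mem_enum ?sorted_enum.
by rewrite mem_ins !inE mem_enum.
Qed.

Lemma ninv_set1l c K : ninv [set c] K = count (fun k : 'I_n => (k < c)%N) (enum K).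
Proof.
rewrite /ninv -size_filter.
have -> : [set p : 'I_n * 'I_n | (p.1 \in [set c]) && (p.2 \in K) && (p.2 < p.1)%N]
          = pair c @: [set k in K | (k < c)%N].
  apply/setP=> -[a b]; rewrite !inE /=; apply/idP/imsetP.
    by case/andP=> /andP[/eqP -> bK] lt; exists b; rewrite // inE bK.
  by case=> k; rewrite inE => /andP[kK lt] [-> ->]; rewrite eqxx kK.
rewrite card_imset; last by move=> x y [].
rewrite cardE; congr size; apply/esym/eq_sorted_enum => [|x].
  exact/(sorted_filter ord_lt_trans)/sorted_enum.
by rewrite mem_filter mem_enum inE andbC.
Qed.

End SortedEnum.

Section QuasiInverse.
Variables (A : comPzSemiRingType) (n : nat) (M : 'M[A]_n).
Local Notation gelt := (gelt A n).
Local Notation gbasis := (@gbasis A n).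
Local Notation gscale := (@gscale A n).
Local Notation gneg := (@gneg A n).
Local Notation gnegn := (@gnegn A n).
Local Notation gext := (@gext A n).
Local Notation wedge := (@wedge A n).
Local Notation vec := (@vec A n).
Local Notation unitv := (@unitv A n).
Local Notation units := (@units A n).
Local Notation f := (fV M).
Local Notation DbarL := (DbarL M).
Local Notation Dbark := (Dbark M).
Implicit Types (a b : 'I_n -> A) (l : seq ('I_n -> A)) (x y : gelt) (c : 'I_n) (K : {set 'I_n}).

Lemma DbarL_cons a l j : DbarL j (a :: l) =
  wedge (vec a) (DbarL j l) + if j is j'.+1 then wedge (vec (f a)) (DbarL j' l) else 0.
Proof. by []. Qed.

Lemma DbarL_swap a b l j : DbarL j (a :: b :: l) = gneg (DbarL j (b :: a :: l)).
Proof.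
case: j => [|[|j]]; rewrite !DbarL_cons !wedgeDr ?wedge0r ?addr0 ?gnegD -!wedge_vecCA;
  [by [] | exact: addrAC | exact: addrACA].
Qed.

Lemma DbarL_ins c s j : c \notin s -> sorted (@ord_lt n) s ->
  DbarL j (unitv c :: map unitv s) =
  gnegn (count (fun k : 'I_n => (k < c)%N) s) (DbarL j (map unitv (ins c s))).
Proof.
elim: s j => [|k s IH] j //; rewrite inE negb_or => /andP[ck cs] ks.
have lt_k : {in s, forall x : 'I_n, (k < x)%N}.
  by apply/allP; move: ks; rewrite /= (path_sortedE (@ord_lt_trans n)) => /andP[].
have {}IH j' := IH j' cs (path_sorted ks).
rewrite [ins _ _]/=; case: ifPn => [ltck | leck].
  suff -> : count (fun x : 'I_n => (x < c)%N) (k :: s) = 0%N by [].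
  apply/eqP; rewrite -leqn0 leqNgt -has_count; apply/hasP => -[x].
  by rewrite inE => /predU1P[-> | /lt_k ltkx]; apply/negP; rewrite -leqNgt ltnW // (ltn_trans ltck).
have ltkc : (k < c)%N.
  by rewrite ltn_neqAle leqNgt leck andbT; apply: contra ck => /eqP/val_inj->.
rewrite [count _ _]/= ltkc add1n gnegnS !map_cons DbarL_swap; congr gneg.
rewrite DbarL_cons [in RHS]DbarL_cons IH wedgeNnr raddfD; congr (_ + _).
by case: j => [|j]; rewrite ?raddf0 // IH wedgeNnr.
Qed.

Lemma DbarL_setU1 c K j : c \notin K ->
  DbarL j (units (c |: K)) = gnegn (ninv [set c] K) (DbarL j (unitv c :: units K)).
Proof.
move=> cK; rewrite /units enum_setU1 // ninv_set1l DbarL_ins ?gnegnK ?mem_enum //.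
exact: sorted_enum.
Qed.

Lemma DbarkE j : Dbark j =1 gext (fun k => gnegn (j + k.2) (DbarL j (units k.1))).
Proof. by []. Qed.

Lemma Dbark_is_nmod_morphism j : nmod_morphism (Dbark j).
Proof. by split=> [|x y]; rewrite !DbarkE ?raddf0 ?raddfD. Qed.
HB.instance Definition _ j :=
  GRing.isNmodMorphism.Build gelt gelt (Dbark j) (Dbark_is_nmod_morphism j).

Lemma Dbark_sum j (I : finType) (F : I -> gelt) :
  Dbark j (\sum_i F i) = \sum_i Dbark j (F i).
Proof. exact: raddf_sum. Qed.
Lemma DbarkZ j (a : A) x : Dbark j (gscale a x) = gscale a (Dbark j x).
Proof. by rewrite !DbarkE gextZ. Qed.
Lemma Dbark_gbasis j K (b : bool) : Dbark j (gbasis (K, b)) = gnegn (j + b) (DbarL j (units K)).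
Proof. by rewrite DbarkE gext_gbasis. Qed.
Lemma DbarkN j x : Dbark j (gneg x) = gneg (Dbark j x).
Proof.
by rewrite !DbarkE; apply: gextN => -[K b]; apply: gnegn_addN.
Qed.

Lemma DbarkNn j i x : Dbark j (gnegn i x) = gnegn i (Dbark j x).
Proof. by rewrite /gnegn; case: (odd i); rewrite ?DbarkN. Qed.

Lemma Dbark_gext j F x : Dbark j (gext F x) = gext (fun k => Dbark j (F k)) x.
Proof. exact: (gext_comp _ (DbarkZ j)). Qed.

Lemma deg_ge1_DbarL j a l : deg_ge 1 (DbarL j (a :: l)).
Proof.
have vec_wedge b y : deg_ge 1 (wedge (vec b) y) by exact/deg_ge_wedgel/deg_ge1_vec.
rewrite DbarL_cons; apply: deg_geD; first exact: vec_wedge.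
by case: j => [|j]; [apply: deg_ge0 | apply: vec_wedge].
Qed.

Lemma deg_ge1_Dbark_gbasis j K (b : bool) : K != set0 -> deg_ge 1 (Dbark j (gbasis (K, b))).
Proof.
case/set0Pn=> c cK; rewrite Dbark_gbasis /units; apply: deg_geNn.
by move: cK; rewrite -mem_enum; case: (enum K) => [|c' l] //= _; apply: deg_ge1_DbarL.
Qed.

(* [zDbark t x] is the coefficient of [z^t] in [z Dbar(z) x]. *)
Definition zDbark t x := if t is t'.+1 then Dbark t' x else 0.

Lemma Dbark_wedge_unitv c K t : c \notin K ->
  Dbark t (wedge (vec (unitv c)) (gbasis (K, false))) =
  wedge (vec (unitv c)) (Dbark t (gbasis (K, false))) +
  gneg (wedge (vec (f (unitv c))) (zDbark t (gbasis (K, false)))).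
Proof.
move=> cK; rewrite wedge_unitv_notin // Dbark_gbasis DbarL_setU1 // -gnegnD.
rewrite -gnegn_odd !oddD oddb addbK gnegn_odd DbarL_cons raddfD.
rewrite Dbark_gbasis addn0 wedgeNnr; congr (_ + _).
by case: t => [|t] /=; rewrite ?wedge0r ?raddf0 // Dbark_gbasis addn0 wedgeNnr gnegnS.
Qed.

End QuasiInverse.

Section VectorCase.
Variables (A : comPzSemiRingType) (n : nat) (M : 'M[A]_n) (J : {set 'I_n}).
Local Notation gbasis := (@gbasis A n).
Local Notation gneg := (@gneg A n).
Local Notation gnegn := (@gnegn A n).
Local Notation wedge := (@wedge A n).
Local Notation vec := (@vec A n).
Local Notation unitv := (@unitv A n).
Local Notation f := (fV M).
Local Notation Dbark := (Dbark M).
Local Notation zDbark := (zDbark M).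
Local Notation bJ := (gbasis (J, false)).
Implicit Types (c : 'I_n -> A) (i : 'I_n).

Definition vmask (S : {set 'I_n}) c : 'I_n -> A := fun i => if i \in S then c i else 0.
Local Notation offJ c := (vmask (~: J) c).
Local Notation onJ c := (vmask J c).

Lemma vmask_split c : c =1 fun i => offJ c i + onJ c i.
Proof. by move=> i; rewrite /vmask inE; case: (i \in J); rewrite ?add0r ?addr0. Qed.

Lemma vec_vmask_split c : vec c = vec (offJ c) + vec (onJ c).
Proof. by rewrite -vecD; apply: eq_vec; apply: vmask_split. Qed.

Lemma vec_fV_vmask_split c : vec (f c) = vec (f (offJ c)) + vec (f (onJ c)).
Proof.
rewrite -vecD; apply: eq_vec => j; rewrite -fVD.
by rewrite /fV; apply: eq_bigr => i _; rewrite -vmask_split.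
Qed.

Lemma wedge_vec_vmask_gbasis c (b : bool) : wedge (vec (onJ c)) (gbasis (J, b)) = 0.
Proof.
rewrite (vec_expand (onJ c)) wedge_suml big1 // => i _.
rewrite wedgeZl /vmask; case: ifP => iJ; last by rewrite gscale0r.
by rewrite wedge_unitv_in // raddf0.
Qed.

Lemma wedge_vec_gbasisJ c : wedge (vec c) bJ = wedge (vec (offJ c)) bJ.
Proof. by rewrite {1}vec_vmask_split wedgeDl wedge_vec_vmask_gbasis addr0. Qed.

Lemma Dbark_wedge_vec c t :
  Dbark t (wedge (vec c) bJ) =
  wedge (vec (offJ c)) (Dbark t bJ) + gneg (wedge (vec (f (offJ c))) (zDbark t bJ)).
Proof.
rewrite wedge_vec_gbasisJ [vec (offJ c)]vec_expand [vec (f _)]vec_fV.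
rewrite !wedge_suml Dbark_sum gneg_sum -big_split; apply: eq_bigr => i _ /=.
rewrite !wedgeZl DbarkZ gnegZ -gscalerDr /vmask inE.
by case: ifP => iJ; rewrite ?gscale0r // Dbark_wedge_unitv.
Qed.

Section InJ.
Variables (i : 'I_n) (iJ : i \in J).
Local Notation s := (ninv [set i] (J :\ i)).
Local Notation bJi := (gbasis (J :\ i, false)).
Local Notation ei := (vec (unitv i)).
Local Notation fei := (vec (f (unitv i))).

Lemma gbasis_setD1 : bJ = gnegn s (wedge ei bJi).
Proof.
rewrite wedge_unitv_notin ?setD11 // setD1K //= /gnegn.
by case: (odd s); rewrite // gneg_gbasis.
Qed.

Lemma wedge_unitv_DbarkJ t :
  wedge ei (Dbark t bJ) = gnegn s (gneg (wedge ei (wedge fei (zDbark t bJi)))).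
Proof.
rewrite {1}gbasis_setD1 DbarkNn Dbark_wedge_unitv ?setD11 // wedgeNnr wedgeDr.
by rewrite -wedgeA wedge_unitv_unitv wedge0l add0r wedgeNr.
Qed.

(* Both sides equal (-)^s (-)(b_i /\ f b_i /\ Dbar_t b_(J\i)), the left one up to the
   quasi-zero coming from f b_i /\ f b_i. *)
Lemma wedge_fV_unitv_DbarkJ t :
  qsucceq (wedge fei (Dbark t bJ)) (wedge ei (Dbark t.+1 bJ)).
Proof.
rewrite wedge_unitv_DbarkJ {1}gbasis_setD1 DbarkNn Dbark_wedge_unitv ?setD11 //.
rewrite wedgeNnr wedgeDr raddfD wedge_vecCA wedgeNr.
exists (gnegn s (gneg (wedge fei (wedge fei (zDbark t bJi))))) => //.
by apply/quasi_zeroNn/quasi_zeroN; rewrite -wedgeA; apply/quasi_zero_wedgel/quasi_zero_wedge_vec.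
Qed.

End InJ.

Lemma wedge_vec_vmask_Dbark0 c : wedge (vec (onJ c)) (Dbark 0 bJ) = 0.
Proof.
rewrite (vec_expand (onJ c)) wedge_suml big1 // => i _.
rewrite wedgeZl /vmask; case: ifP => iJ; last by rewrite gscale0r.
by rewrite wedge_unitv_DbarkJ //= !wedge0r !raddf0.
Qed.

Lemma wedge_fV_vmask_Dbark c t :
  qsucceq (wedge (vec (f (onJ c))) (Dbark t bJ)) (wedge (vec (onJ c)) (Dbark t.+1 bJ)).
Proof.
rewrite vec_fV (vec_expand (onJ c)) !wedge_suml; apply: qsucceq_sum => i.
rewrite !wedgeZl /vmask; case: ifP => iJ; first exact/qsucceqZ/wedge_fV_unitv_DbarkJ.
by rewrite !gscale0r; apply: qsucceqxx.
Qed.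

Lemma Dbark_wedge_iter_gbasis c h : J != set0 ->
  qsucceq (\sum_(i < h.+1) Dbark i (wedge (vec (iter (h - i) f c)) bJ))
          (wedge (vec c) (Dbark h bJ)).
Proof.
move=> J0; elim: h c => [|h IH] c.
  rewrite big_ord1 Dbark_wedge_vec /= wedge0r raddf0 addr0.
  rewrite [in X in qsucceq _ X]vec_vmask_split wedgeDl wedge_vec_vmask_Dbark0 addr0.
  exact: qsucceqxx.
rewrite big_ord_recr subnn /=.
have -> : \sum_(i < h.+1) Dbark i (wedge (vec (iter (h.+1 - i) f c)) bJ) =
          \sum_(i < h.+1) Dbark i (wedge (vec (iter (h - i) f (f c))) bJ).
  by apply: eq_bigr => i _; rewrite subSn ?iterSr // -ltnS.
apply: qsucceq_trans (qsucceqD (IH (f c)) (qsucceqxx _)) _.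
rewrite Dbark_wedge_vec /= vec_fV_vmask_split wedgeDl [X in X + _]addrC addrACA.
(* [IH] contributes f(c_off) /\ Dbar_h b_J and the Leibniz rule its negation. *)
apply: qsucceq_trans (qsucceq_addr _ _) _.
  apply: quasi_zero_addN; exact: deg_ge_wedge (deg_ge1_vec _) (deg_ge1_Dbark_gbasis _ _ _ J0).
rewrite addrC [in X in qsucceq _ X]vec_vmask_split wedgeDl.
exact/qsucceqD/wedge_fV_vmask_Dbark/qsucceqxx.
Qed.

End VectorCase.

Section VectorWedge.
Variables (A : comPzSemiRingType) (n : nat) (M : 'M[A]_n).
Local Notation gbasis := (@gbasis A n).
Local Notation wedge := (@wedge A n).
Local Notation vec := (@vec A n).
Local Notation f := (fV M).
Local Notation Dbark := (Dbark M).

Lemma Dbark_wedge_iter c h (V : gelt A n) : deg_ge 1 V ->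
  qsucceq (\sum_(i < h.+1) Dbark i (wedge (vec (iter (h - i) f c)) V))
          (wedge (vec c) (Dbark h V)).
Proof.
move=> V1; have eV x : wedge x V = gext (fun k => wedge x (gbasis k)) V.
  by rewrite -{1}(gext_gbasisE V) wedge_gextr.
under eq_bigr do rewrite eV Dbark_gext.
rewrite gext_sumF -[in X in qsucceq _ X](gext_gbasisE V) Dbark_gext wedge_gextr.
apply: qsucceq_gext => -[K b] VK0.
have K0 : K != set0 by apply: contraNneq VK0 => K0; rewrite V1 // K0 cards0.
case: b {VK0}; last exact: Dbark_wedge_iter_gbasis.
rewrite -[(K, true)]/(flip_key (K, false)) -gneg_gbasis.
under eq_bigr do rewrite wedgeNr DbarkN.
by rewrite DbarkN wedgeNr -gneg_sum; apply/qsucceqN/Dbark_wedge_iter_gbasis.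
Qed.

End VectorWedge.

Lemma sum_ord_rev (V : nmodType) m (F : nat -> V) :
  \sum_(i < m.+1) F i = \sum_(i < m.+1) F (m - i)%N.
Proof. by rewrite (reindex_inj rev_ord_inj); apply: eq_bigr => i _ /=; rewrite subSS. Qed.

Lemma sum_triangle (V : nmodType) m (F : nat -> nat -> V) :
  \sum_(i < m.+1) \sum_(j < (m - i).+1) F i j =
  \sum_(j < m.+1) \sum_(i < (m - j).+1) F i j.
Proof.
have widen (G : nat -> V) i : (i <= m)%N ->
    \sum_(j < (m - i).+1) G j = \sum_(j < m.+1 | (i + j <= m)%N) G j.
  move=> im; rewrite (big_ord_widen _ _ (leq_subr i m : (m - i).+1 <= m.+1)%N).
  by apply: eq_bigl => j; rewrite ltnS leq_subRL.
transitivity (\sum_(i < m.+1) \sum_(j < m.+1 | (i + j <= m)%N) F i j).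
  by apply: eq_bigr => i _; rewrite widen // -ltnS.
rewrite (exchange_big_dep xpredT) //; apply: eq_bigr => j _.
rewrite (widen (F^~ j)); last by rewrite -ltnS.
by apply: eq_bigl => i; rewrite addnC.
Qed.

Section Main.
Variables (A : comPzSemiRingType) (n : nat) (M : 'M[A]_n).
Local Notation gelt := (gelt A n).
Local Notation gbasis := (@gbasis A n).
Local Notation gneg := (@gneg A n).
Local Notation gnegn := (@gnegn A n).
Local Notation gext := (@gext A n).
Local Notation wedge := (@wedge A n).
Local Notation vec := (@vec A n).
Local Notation unitv := (@unitv A n).
Local Notation units := (@units A n).
Local Notation f := (fV M).
Local Notation DL := (DL M).
Local Notation Dk := (Dk M).
Local Notation Dbark := (Dbark M).
Implicit Types (x y u v : gelt) (K : {set 'I_n}).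

Lemma DL_cons j a l :
  DL j (a :: l) = \sum_(i < j.+1) wedge (vec (iter i f a)) (DL (j - i) l).
Proof. by []. Qed.

Lemma DkE j : Dk j =1 gext (fun k => gnegn k.2 (DL j (units k.1))).
Proof. by []. Qed.
Lemma Dk_gbasis j K (b : bool) : Dk j (gbasis (K, b)) = gnegn b (DL j (units K)).
Proof. by rewrite DkE gext_gbasis. Qed.
Lemma DkN j x : Dk j (gneg x) = gneg (Dk j x).
Proof. by rewrite !DkE; apply: gextN => -[K b]; apply: (gnegn_addN 0). Qed.
Lemma Dk_gext j x : Dk j x = gext (fun k => Dk j (gbasis k)) x.
Proof. by rewrite DkE; apply: eq_gext => k; rewrite DkE gext_gbasis. Qed.

Lemma lhs_coefE m u v :
  lhs_coef M m u v = \sum_(i < m.+1) Dbark i (wedge (Dk (m - i) u) v).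
Proof. by []. Qed.

Lemma lhs_coef_gext m u v :
  lhs_coef M m u v = gext (fun k => lhs_coef M m (gbasis k) v) u.
Proof.
rewrite lhs_coefE -gext_sumF; apply: eq_bigr => i _.
by rewrite Dk_gext wedge_gextl Dbark_gext.
Qed.

Lemma lhs_coefN m u v : lhs_coef M m (gneg u) v = gneg (lhs_coef M m u v).
Proof.
rewrite !lhs_coefE gneg_sum; apply: eq_bigr => i _.
by rewrite DkN wedgeNl DbarkN.
Qed.

Lemma wedgeDbarkE j u v : wedgeDbark M j u v = wedge u (Dbark j v).
Proof.
rewrite DbarkE wedge_gextr; apply: eq_gext => k.
by rewrite wedgeNnr.
Qed.

Lemma wedge_gbasis0l x : wedge (gbasis (set0, false)) x = x.
Proof.
rewrite -[x in wedge _ x]gext_gbasisE wedge_gextr -[RHS]gext_gbasisE.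
apply: eq_gext => -[K b]; rewrite wedge_gbasis /wedge_basis /= -setI_eq0 set0I eqxx set0U.
have -> : ninv set0 K = 0%N.
  by apply/eqP; rewrite cards_eq0; apply/eqP/setP => -[a c]; rewrite !inE.
by rewrite addbF.
Qed.

Lemma lhs_coef_gbasis0 m v :
  lhs_coef M m (gbasis (set0, false)) v = wedge (gbasis (set0, false)) (Dbark m v).
Proof.
rewrite wedge_gbasis0l lhs_coefE big_ord_recr /= big1 ?add0r => [|i _].
  by rewrite subnn Dk_gbasis /units enum_set0 /= wedge_gbasis0l.
rewrite Dk_gbasis /units enum_set0 /= subn_eq0 leqNgt ltn_ord /=.
by rewrite wedge0l raddf0.
Qed.

Lemma lhs_coef_gbasis_cons m k K v : deg_ge 1 v -> k \notin K ->
  {in K, forall i : 'I_n, (k < i)%N} ->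
  qsucceq (lhs_coef M m (gbasis (k |: K, false)) v)
          (wedge (vec (unitv k)) (lhs_coef M m (gbasis (K, false)) v)).
Proof.
move=> v1 kK ltkK; pose X q := wedge (DL q (units K)) v.
have units_kK : units (k |: K) = unitv k :: units K.
  rewrite /units enum_setU1 //; case: (enum K) (mem_enum K) => //= i s iK.
  by rewrite ifT // ltkK // -iK mem_head.
(* Index by the power q of z taken from D(z) b_K. *)
have -> : lhs_coef M m (gbasis (k |: K, false)) v =
    \sum_(i < m.+1) \sum_(q < (m - i).+1)
      Dbark i (wedge (vec (iter (m - q - i) f (unitv k))) (X q)).
  rewrite lhs_coefE; apply: eq_bigr => i _.
  rewrite Dk_gbasis units_kK DL_cons wedge_suml Dbark_sum (reindex_inj rev_ord_inj).
  by apply: eq_bigr => q _ /=; rewrite wedgeA subSS subKn 1?subnAC // -ltnS.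
rewrite (sum_triangle m (fun i q => Dbark i (wedge (vec (iter (m - q - i) f (unitv k))) (X q)))).
apply: qsucceq_trans (qsucceq_sum (fun q => Dbark_wedge_iter _ _ _ _)) _.
  by move=> q; apply: deg_ge_wedger.
rewrite -wedge_sumr.
have -> : \sum_(q < m.+1) Dbark (m - q) (X q) = lhs_coef M m (gbasis (K, false)) v.
  rewrite lhs_coefE (sum_ord_rev m (fun i => Dbark i (wedge (Dk (m - i) (gbasis (K, false))) v))).
  by apply: eq_bigr => q _; rewrite subKn ?Dk_gbasis // -ltnS.
exact: qsucceqxx.
Qed.

Lemma gbasis_setU1_min k K : k \notin K -> {in K, forall i : 'I_n, (k < i)%N} ->
  gbasis (k |: K, false) = wedge (vec (unitv k)) (gbasis (K, false)).
Proof.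
move=> kK ltkK; rewrite wedge_unitv_notin // ninv_set1l.
rewrite (eq_in_count (a2 := pred0)) ?count_pred0 // => i /[!mem_enum] /ltkK ltki /=.
by rewrite ltnNge ltnW.
Qed.

Lemma lhs_coef_gbasis m K v : deg_ge 1 v ->
  qsucceq (lhs_coef M m (gbasis (K, false)) v) (wedge (gbasis (K, false)) (Dbark m v)).
Proof.
move=> v1; have [s ss ->] : exists2 s, sorted (@ord_lt n) s & K = [set i in s].
  by exists (enum K); [exact: sorted_enum | apply/setP => i; rewrite inE mem_enum].
elim: s ss => [_|k s IH ks].
  rewrite (_ : [set i in [::]] = set0); last by apply/setP => i; rewrite !inE.
  by rewrite lhs_coef_gbasis0; apply: qsucceqxx.
have /andP[lt_ks ss] : all (ord_lt k) s && sorted (@ord_lt n) s.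
  by rewrite -(path_sortedE (@ord_lt_trans n)).
have ltks : {in [set i in s], forall i : 'I_n, (k < i)%N}.
  by move=> i; rewrite inE => /(allP lt_ks).
have kS : k \notin [set i in s] by apply/negP => /ltks; rewrite ltnn.
rewrite (_ : [set i in k :: s] = k |: [set i in s]); last by apply/setP => i; rewrite !inE.
apply: qsucceq_trans (lhs_coef_gbasis_cons _ v1 kS ltks) _.
by rewrite gbasis_setU1_min // wedgeA; apply/qsucceq_wedgel/IH.
Qed.

Lemma lhs_coef_qsucceq m u v : deg_ge 1 v ->
  qsucceq (lhs_coef M m u v) (wedge u (Dbark m v)).
Proof.
move=> v1; rewrite lhs_coef_gext -[u in wedge u _]gext_gbasisE wedge_gextl.
apply: qsucceq_gext => -[K b] _; case: b; last exact: lhs_coef_gbasis.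
rewrite -[(K, true)]/(flip_key (K, false)) -gneg_gbasis lhs_coefN wedgeNl.
exact/qsucceqN/lhs_coef_gbasis.
Qed.

End Main.

Theorem theorem3p5 (A : comPzSemiRingType) (n : nat) (M : 'M[A]_n)
    (u v : gelt A n) :
  (2 <= n)%N -> pos_part u -> pos_part v ->
  forall m : nat, succeq (lhs_coef M m u v) (wedgeDbark M m u v).
Proof.
move=> _ _ [v_wf v0] m; rewrite wedgeDbarkE; apply/qsucceq_succeq/lhs_coef_qsucceq.
case=> K b /=; rewrite ltnS leqn0 cards_eq0 => /eqP ->.
by case: b; [apply: v_wf; rewrite cards0 | exact: v0].
Qed.
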